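(* Let $K\ge2$ and let $\mathscr{M}_K\subseteq\mathscr{S}_K$ be closed with at least two elements. Then $$4\,\kappa(\{\{1,\dots,K\}\},\mathscr{M}_K)\ge\mathrm{diam}^2(\mathscr{M}_K):=\max\{\|\nu-\gamma\|^2:\nu,\gamma\in\mathscr{M}_K\}.$$
   Context: $\mathscr{S}_K=\{\delta\in[0,1]^K:\sum_i\delta_i=1\}$; $\|\cdot\|$ Euclidean norm; $e_j(K)$ the $j$-th standard basis vector of $\mathbb{R}^K$. For a partition $\mathcal{H}=\{\mathcal{H}_1,\dots,\mathcal{H}_l\}$ of $\{1,\dots,K\}$, let $B_i$ be the $K\times|\mathcal{H}_i|$ matrix with columns $e_j(K)$, $j\in\mathcal{H}_i$, and define $$\kappa(\mathcal{H},\mathscr{M}_K)=\sup\Big\{\Big[\max_{\delta\in\mathscr{M}_K}v'\delta-\sup_{\delta\in\mathscr{T}}v'\delta\Big]\wedge\min_{i=1,\dots,l}\Big[\max_{\delta\in\mathscr{M}_K}(v+B_iw_i)'\delta-\sup_{\delta\in\mathscr{M}_K\setminus\mathscr{T}}(v+B_iw_i)'\delta\Big]\Big\},$$ the supremum over all nonempty Borel sets $\mathscr{T}\subsetneq\mathscr{M}_K$, all $v\in[-1,1]^K$ and all $w_i\in[-1,1]^{|\mathcal{H}_i|}$, $i=1,\dots,l$. *)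

From HB Require Import structures.
From mathcomp Require Import all_boot all_order all_algebra.
From mathcomp Require Import all_classical all_reals all_analysis.
Set Implicit Arguments. Unset Strict Implicit. Unset Printing Implicit Defensive.
Import Order.TTheory GRing.Theory Num.Theory.
Import numFieldNormedType.Exports.
Local Open Scope classical_set_scope.
Local Open Scope ring_scope.

Section Defs.
Variables (R : realType) (K : nat).

Definition dotp (v d : 'rV[R]_K) : R := \sum_(j < K) v 0 j * d 0 j.

Definition sqdist (x y : 'rV[R]_K) : R := \sum_(j < K) (x 0 j - y 0 j) ^+ 2.

Definition simplex : set 'rV[R]_K :=
  [set d | (forall j, 0 <= d 0 j <= 1) /\ \sum_(j < K) d 0 j = 1].

Definition borel_set (A : set 'rV[R]_K) : Prop := <<s (fun B : set 'rV[R]_K => open B) >> A.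

Definition in_cube (v : 'rV[R]_K) : Prop := forall j, -1 <= v 0 j <= 1.

(* B_i w_i : the vector with entries w at the coordinates in H, 0 elsewhere *)
Definition embed (H : {set 'I_K}) (w : 'rV[R]_K) : 'rV[R]_K :=
  \row_j (if j \in H then w 0 j else 0).

Definition gap (M T : set 'rV[R]_K) (u : 'rV[R]_K) : R :=
  sup [set dotp u d | d in M] - sup [set dotp u d | d in T].

(* The family (w_i)_i is given by w : {set 'I_K} -> 'rV_K, where only the
   coordinates of w H in H matter and are required to lie in [-1,1]. *)
Definition kappa (P : {set {set 'I_K}}) (M : set 'rV[R]_K) : R :=
  sup [set x | exists (T : set 'rV[R]_K) (v : 'rV[R]_K)
                      (w : {set 'I_K} -> 'rV[R]_K),
        [/\ borel_set T, T !=set0, T `<=` M & T != M] /\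
        [/\ in_cube v,
            (forall H, H \in P -> forall j, j \in H -> -1 <= w H 0 j <= 1) &
            x = \big[Order.min/gap M T v]_(H in P)
                   gap M (M `\` T) (v + embed H (w H))]].

Definition diam2 (M : set 'rV[R]_K) : R :=
  sup [set sqdist x y | x in M & y in M].

End Defs.

(* Given distinct ν, γ in M, put u := ν - γ and cut M by the hyperplane
   u'δ = c through the midpoint c of u'γ and u'ν: T := {δ ∈ M | u'δ <= c}.
   For v := u/2 and w := -u (so that v + w = -u/2) both gaps in κ are at least
   (u'ν - u'γ)/4 = ‖ν - γ‖²/4, the first witnessed by ν and the second by γ.
   The entries of u lie in [-1,1] because ν and γ lie in the simplex, and T is
   Borel because it is closed. *)

From HB Require Import structures.
From mathcomp Require Import all_boot all_order all_algebra.
From mathcomp Require Import all_classical all_reals all_analysis.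
From mathcomp Require Import ring lra.
Import Order.TTheory GRing.Theory Num.Theory.
Import numFieldNormedType.Exports.
Local Open Scope classical_set_scope.
Local Open Scope ring_scope.

Section Simplex.
Context {R : realType} {K : nat}.
Implicit Types (u v w d x y : 'rV[R]_K) (A M S T : set 'rV[R]_K).

Lemma coord_continuous (j : 'I_K) : continuous (fun x : 'rV[R]_K => x 0 j).
Proof.
move=> x A /nbhs_ballP[e /= e0 eA].
by apply/nbhs_ballP; exists e => //= y [_ xy]; apply: eA; exact: xy.
Qed.

Lemma dotp_continuous u : continuous (dotp u).
Proof.
apply: (@continuous_big _ _ +%R 0 xpredT); first exact: add_continuous.
by move=> j _ x; apply: continuousM; [exact: cst_continuous | exact: coord_continuous].
Qed.

Lemma closed_borel_set A : closed A -> borel_set A.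
Proof.
move=> cA; rewrite -[A]setCK; apply: sigma_algebraC; apply: sub_sigma_algebra.
exact: closed_openC.
Qed.

Lemma dotpZl (k : R) u d : dotp (k *: u) d = k * dotp u d.
Proof. by rewrite /dotp mulr_sumr; apply: eq_bigr => j _; rewrite !mxE mulrA. Qed.

Lemma embed_setT w : embed [set: 'I_K]%SET w = w.
Proof. by apply/rowP => j; rewrite mxE finset.in_setT. Qed.

Lemma dotp_subl_sqdist x y : dotp (x - y) x - dotp (x - y) y = sqdist x y.
Proof. by rewrite /dotp /sqdist -sumrB; apply: eq_bigr => j _; rewrite !mxE; ring. Qed.

Lemma sqdist_ge0 x y : 0 <= sqdist x y.
Proof. by apply: sumr_ge0 => j _; exact: sqr_ge0. Qed.

Lemma sqdist_gt0 [x y] : x != y -> 0 < sqdist x y.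
Proof.
move=> xy; rewrite lt_def sqdist_ge0 andbT; apply: contra xy => /eqP xy0.
apply/eqP/rowP => j; apply/eqP; rewrite -subr_eq0 -sqrf_eq0; apply/eqP.
exact: (psumr_eq0P (fun j _ => sqr_ge0 (x 0 j - y 0 j)) xy0).
Qed.

Lemma norm_dotp_simplex v [d] : simplex d -> `|dotp v d| <= \sum_j `|v 0 j|.
Proof.
move=> [d01 _]; apply: le_trans (ler_norm_sum _ _ _) _.
apply: ler_sum => j _; have /andP[d0 d1] := d01 j.
by rewrite normrM (ger0_norm d0) ler_piMr.
Qed.

Lemma sum_norm_cube v : in_cube v -> \sum_j `|v 0 j| <= K%:R.
Proof.
move=> v1; apply: le_trans (_ : \sum_(j < K) (1 : R) <= _).
  by apply: ler_sum => j _; rewrite ler_norml; exact: v1.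
by rewrite sumr_const card_ord.
Qed.

Lemma sub_simplex_in_cube x y : simplex x -> simplex y -> in_cube (x - y).
Proof.
move=> [x01 _] [y01 _] j; rewrite !mxE.
by have /andP[? ?] := x01 j; have /andP[? ?] := y01 j; apply/andP; split; lra.
Qed.

Lemma in_cubeZ (k : R) v : `|k| <= 1 -> in_cube v -> in_cube (k *: v).
Proof.
move=> k1 v1 j; rewrite mxE -ler_norml normrM.
by rewrite -[1]mulr1 ler_pM // ler_norml; exact: v1.
Qed.

Lemma has_sup_dotp S v : S `<=` @simplex R K -> S !=set0 ->
  has_sup [set dotp v d | d in S].
Proof.
move=> Ss [d Sd]; split; first by exists (dotp v d), d.
exists (\sum_j `|v 0 j|) => _ [e Se <-].
exact: le_trans (ler_norm _) (norm_dotp_simplex v (Ss _ Se)).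
Qed.

Lemma sup_dotp_ge [S] v [d] : S `<=` @simplex R K -> S d ->
  dotp v d <= sup [set dotp v d | d in S].
Proof.
move=> Ss Sd; apply: sup_upper_bound; last by exists d.
by apply: has_sup_dotp => //; exists d.
Qed.

Lemma sup_dotp_le S v b : S !=set0 -> (forall d, S d -> dotp v d <= b) ->
  sup [set dotp v d | d in S] <= b.
Proof.
move=> [d Sd] Sb; apply: ge_sup; first by exists (dotp v d), d.
by move=> _ [e Se <-]; exact: Sb.
Qed.

Lemma gap_le [M T] v : M `<=` @simplex R K -> T `<=` M -> T !=set0 ->
  gap M T v <= 2 * \sum_j `|v 0 j|.
Proof.
move=> Ms TM [d Td]; have Md := TM _ Td.
have dv := norm_dotp_simplex v (Ms _ Md); move: dv; rewrite ler_norml => /andP[dv1 dv2].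
have supM : sup [set dotp v d | d in M] <= \sum_j `|v 0 j|.
  apply: sup_dotp_le; first by exists d.
  by move=> e Me; apply: le_trans (ler_norm _) (norm_dotp_simplex v (Ms _ Me)).
have supT := sup_dotp_ge v (subset_trans TM Ms) Td.
rewrite /gap; lra.
Qed.

Lemma gap_ge [M T v d] c : M `<=` @simplex R K -> M d -> T !=set0 ->
  (forall e, T e -> dotp v e <= c) -> dotp v d - c <= gap M T v.
Proof.
move=> Ms Md T0 Tc; rewrite /gap lerB //; first exact: sup_dotp_ge.
exact: sup_dotp_le.
Qed.

Lemma kappa_ge [P : {set {set 'I_K}}] [M T] v (w : {set 'I_K} -> 'rV[R]_K) :
  M `<=` @simplex R K -> borel_set T -> T !=set0 -> T `<=` M -> T != M ->
  in_cube v -> (forall H, H \in P -> forall j, j \in H -> -1 <= w H 0 j <= 1) ->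
  \big[Order.min/gap M T v]_(H in P) gap M (M `\` T) (v + embed H (w H))
    <= kappa P M.
Proof.
move=> Ms bT T0 TM TneM v1 w1.
apply: sup_upper_bound; last by exists T, v, w.
split; first by eexists; exists T, v, w.
exists (2 * K%:R) => _ [T' [v' [w' [[_ T'0 T'M _] [v'1 _ ->]]]]].
apply: le_trans (bigmin_le_id _ _ _ _) _.
apply: le_trans (gap_le v' Ms T'M T'0) _.
by rewrite ler_pM2l // sum_norm_cube.
Qed.

Lemma sqdist_le_4kappa [M nu ga] : M `<=` @simplex R K -> closed M ->
  M nu -> M ga -> 0 < sqdist nu ga ->
  sqdist nu ga <= 4 * kappa [set [set: 'I_K]]%SET M.
Proof.
move=> Ms cM Mnu Mga dist_gt0.
pose u := nu - ga; pose c := (dotp u nu + dotp u ga) / 2.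
have ab := dotp_subl_sqdist nu ga; rewrite -/u in ab.
pose T := M `&` [set d | dotp u d <= c].
have bT : borel_set T.
  apply: closed_borel_set (closedI cM _).
  by apply: (preimage_closed _ (@closed_le R c)) => x _; exact: dotp_continuous.
have Tga : T ga by split => //=; rewrite /c; lra.
have nTnu : ~ T nu by move=> [_ /=]; rewrite /c; lra.
have TneM : T != M by apply/eqP => TM; apply: nTnu; rewrite TM.
have MTc d : (M `\` T) d -> - (2^-1 * dotp u d) <= - (2^-1 * c).
  by move=> [Md /not_andP[//|/negP]]; rewrite -ltNge; lra.
have u1 : in_cube u by apply: sub_simplex_in_cube; [exact: Ms | exact: Ms].
have gap_T : sqdist nu ga / 4 <= gap M T (2^-1 *: u).
  apply: le_trans (gap_ge (2^-1 * c) Ms Mnu _ _); last first.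
  - by move=> d [_ /= dc]; rewrite dotpZl ler_pM2l.
  - by exists ga.
  by rewrite dotpZl /c; lra.
have gap_MT : sqdist nu ga / 4 <=
    gap M (M `\` T) (2^-1 *: u + embed [set: 'I_K]%SET (- u)).
  have -> : 2^-1 *: u + embed [set: 'I_K]%SET (- u) = (- 2^-1) *: u.
    by rewrite embed_setT -{2}[u]scale1r -scaleNr -scalerDl; congr (_ *: _); field.
  apply: le_trans (gap_ge (- (2^-1 * c)) Ms Mga _ _); last first.
  - by move=> d /MTc; rewrite dotpZl mulNr.
  - by exists nu.
  by rewrite dotpZl /c; lra.
have w1 H (_ : H \in [set [set: 'I_K]]%SET) j (_ : j \in H) : -1 <= (- u) 0 j <= 1.
  by have /andP[? ?] := u1 j; rewrite mxE; apply/andP; split; lra.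
rewrite -ler_pdivrMl // mulrC; apply: le_trans (kappa_ge (2^-1 *: u) _ Ms bT _ _ TneM _ w1).
- by apply: le_bigmin gap_T _ => H /finset.set1P ->.
- by exists ga.
- exact: subIsetl.
- by apply: in_cubeZ u1; rewrite ger0_norm //; lra.
Qed.
End Simplex.

Theorem lemmaB1 (R : realType) (K : nat) (M : set 'rV[R]_K) :
  (2 <= K)%N ->
  M `<=` @simplex R K ->
  closed M ->
  (exists x y, [/\ M x, M y & x != y]) ->
  4 * kappa [set [set: 'I_K]]%SET M >= diam2 M.
Proof.
move=> _ Ms cM [x0 [y0 [Mx0 My0 x0y0]]].
have kappa_ge0 : 0 <= 4 * kappa [set [set: 'I_K]]%SET M.
  exact: le_trans (sqdist_ge0 x0 y0) (sqdist_le_4kappa Ms cM Mx0 My0 (sqdist_gt0 x0y0)).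
apply: ge_sup; first by exists (sqdist x0 y0), x0 => //; exists y0.
move=> _ [x Mx [y My <-]].
have [|] := ltP 0 (sqdist x y); first exact: sqdist_le_4kappa.
by move/le_trans; apply.
Qed.
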